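(* If a complex number $\alpha$ can be computed by a radical computation tree and $K$ is the splitting field of an irreducible polynomial over $\mathbf{Q}$ having $\alpha$ as one of its roots, then $\mathrm{Gal}(K/\mathbf{Q})$ does not contain the symmetric group $S_n$ as a subgroup for any $n\ge 5$.
   Context: An algebraic computation tree is a rooted tree whose computation nodes compute a value as the sum, difference, product or quotient of integer constants and values computed at ancestor nodes, and whose decision nodes test whether a computed value is greater than zero and branch. A radical computation tree additionally allows computing the $k$-th root of a previously computed value ($k$ an integer parameter) and complex conjugation. A value is computed by the tree if it is computed at some node. *)

(* Complex numbers are modelled by algC (algebraic complex
   numbers); every value computed by a radical computation tree is algebraic. *)
From HB Require Import structures.
From mathcomp Require Import all_boot all_order all_algebra all_fingroup all_field.
Set Implicit Arguments. Unset Strict Implicit. Unset Printing Implicit Defensive.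
Import Order.TTheory GRing.Theory Num.Theory.
Local Open Scope ring_scope.

(* Operands of arithmetic nodes: an integer constant, or the value computed at
   the i-th computation node on the path from the root (ancestors, in order). *)
Inductive operand := Cst of int | Anc of nat.

Inductive arith_op := OAdd | OSub | OMul | ODiv.

Inductive rtree :=
  | Leaf
  | Arith of arith_op & operand & operand & rtree
  | Root of nat & nat & rtree        (* k-th root of the i-th ancestor value *)
  | Conj of nat & rtree              (* conjugate of the i-th ancestor value *)
  | Dec of nat & rtree & rtree.      (* branch on (i-th ancestor value > 0) *)

Definition anc_val (vals : seq algC) (i : nat) : option algC :=
  if (i < size vals)%N then Some (nth 0 vals i) else None.

Definition opnd_val (vals : seq algC) (u : operand) : option algC :=
  match u with Cst z => Some (z%:~R) | Anc i => anc_val vals i end.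

Definition arith_val (o : arith_op) (x y : algC) : option algC :=
  match o with
  | OAdd => Some (x + y)
  | OSub => Some (x - y)
  | OMul => Some (x * y)
  | ODiv => if y != 0 then Some (x / y) else None
  end.

(* [rt k x] is the k-th root chosen by the tree; see the hypothesis in the theorem. *)
Definition node_val (rt : nat -> algC -> algC) (vals : seq algC)
  (o : arith_op) (u v : operand) : option algC :=
  match opnd_val vals u, opnd_val vals v with
  | Some x, Some y => arith_val o x y
  | _, _ => None
  end.

(* A node whose operation is undefined (division by 0, bad index, k = 0)
   computes nothing, nor do its descendants. *)
Fixpoint computed_in (rt : nat -> algC -> algC) (vals : seq algC)
    (t : rtree) (a : algC) : Prop :=
  match t with
  | Leaf => False
  | Arith o u v t' =>
      match node_val rt vals o u v with
      | Some y => y = a \/ computed_in rt (rcons vals y) t' a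
      | None => False
      end
  | Root k i t' =>
      match anc_val vals i with
      | Some x => if (0 < k)%N then
                    let y := rt k x in y = a \/ computed_in rt (rcons vals y) t' a
                  else False
      | None => False
      end
  | Conj i t' =>
      match anc_val vals i with
      | Some x => let y := x^* in y = a \/ computed_in rt (rcons vals y) t' a
      | None => False
      end
  | Dec _ t1 t2 => computed_in rt vals t1 a \/ computed_in rt vals t2 a
  end.

Definition computed_by (rt : nat -> algC -> algC) (t : rtree) (a : algC) : Prop :=
  computed_in rt [::] t a.

From HB Require Import structures.
From mathcomp Require Import all_boot all_order all_algebra all_fingroup all_solvable all_field.
From mathcomp Require Import ring.
Set Implicit Arguments. Unset Strict Implicit. Unset Printing Implicit Defensive.
Import GRing.Theory Num.Theory.
Local Open Scope ring_scope.

(* Every value computed by the tree is reached by a finite sequence of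
   arithmetic operations, complex conjugations and k-th roots with k | m.
   Realise these values in a normal number field N containing a primitive m-th
   root of unity z, and adjoin to Q(z), step by step, the whole Galois orbit of
   each value: every step is a Kummer extension or adds nothing new, so the
   commutators of the Galois group of one layer fix the next one.  Hence some
   term of the derived series of Gal(N/Q) fixes a subfield F containing every
   conjugate of alpha, i.e. every root of p.  Comparing K and N inside algC,
   each element of the corresponding derived term of Gal(K/Q) lifts to one of
   Gal(N/Q), so it fixes the roots of p and is trivial: Gal(K/Q) is solvable,
   and so cannot contain S_n for n >= 5. *)

Section NumberFieldEmbedding.
Variable L : fieldExtType rat.

Definition ratpoly (p : {poly L}) : {poly rat} := map_poly (coord [tuple 1] 0) p.

Lemma ratpolyK p : p \is a polyOver 1%VS -> map_poly (in_alg L) (ratpoly p) = p.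
Proof.
move=> /allP Qp; rewrite /ratpoly -map_poly_comp map_poly_id // => _ /Qp/vlineP[a ->] /=.
by rewrite linearZ /= (coord_free 0) ?mulr1 // seq1_free ?oner_eq0.
Qed.

Section PrimitiveElement.
Variables (g : L) (c : algC).
Hypothesis genL : {:L}%VS = <<1; g>>%VS.
Hypothesis root_c : root (map_poly ratr (ratpoly (minPoly 1 g))) c.

Let q := ratpoly (minPoly 1 g).
Let coef x := ratpoly (Fadjoin_poly 1 g x).

Definition eval_at_conjugate x := (map_poly ratr (coef x)).[c].

Let coefK x : map_poly (in_alg L) (coef x) = Fadjoin_poly 1 g x.
Proof. by rewrite ratpolyK // Fadjoin_polyOver. Qed.

Let coefB x y : coef (x - y) = coef x - coef y.
Proof.
by apply: (map_poly_inj (in_alg L)); rewrite coefK linearB rmorphB /= !coefK.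
Qed.

Let coefM x y : coef (x * y) = (coef x * coef y) %% q.
Proof.
have qK : map_poly (in_alg L) q = minPoly 1 g by rewrite ratpolyK // minPolyOver.
have coef_eval z : (map_poly (in_alg L) (coef z)).[g] = z.
  by rewrite coefK Fadjoin_poly_eq // -genL memvf.
apply: (map_poly_inj (in_alg L)); rewrite map_modp rmorphM qK coefK.
rewrite -Fadjoin_poly_mod; last by rewrite rpredM ?alg_polyOver.
by rewrite hornerM !coef_eval.
Qed.

Lemma eval_at_conjugate_is_zmod_morphism : zmod_morphism eval_at_conjugate.
Proof. by move=> x y; rewrite /eval_at_conjugate coefB rmorphB hornerD hornerN. Qed.

Lemma eval_at_conjugate_is_monoid_morphism : monoid_morphism eval_at_conjugate.
Proof.
rewrite /eval_at_conjugate; split=> [|x y].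
  have -> : coef 1 = 1.
    apply: (map_poly_inj (in_alg L)); rewrite coefK Fadjoin_polyC ?mem1v //.
    by rewrite !rmorph1.
  by rewrite rmorph1 hornerC.
rewrite coefM -hornerM -rmorphM.
rewrite [in RHS](divp_eq (coef x * coef y) q) rmorphD rmorphM hornerD hornerM.
by move/rootP: root_c => ->; rewrite mulr0 add0r.
Qed.

End PrimitiveElement.

Lemma numfield_embedding : {rmorphism L -> algC}.
Proof.
have sepL : separable 1 {:L}.
  by apply/separableP => x _; apply: pcharf0_separable => p; rewrite pchar_lalg pchar_num.
set g := separable_generator 1 {:L}.
have genL : {:L}%VS = <<1; g>>%VS := eq_adjoin_separable_generator sepL (sub1v _).
have : size (map_poly (ratr : rat -> algC) (ratpoly (minPoly 1 g))) != 1.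
  by rewrite size_map_poly -(size_map_poly (in_alg L)) ratpolyK ?minPolyOver ?size_minPoly.
move=> /closed_rootP/sigW[c root_c].
pose fa := GRing.isZmodMorphism.Build _ _ _ (eval_at_conjugate_is_zmod_morphism g c).
pose fm := GRing.isMonoidMorphism.Build _ _ _ (eval_at_conjugate_is_monoid_morphism genL root_c).
exact: (HB.pack (eval_at_conjugate g c) fa fm).
Qed.

End NumberFieldEmbedding.

Lemma map_poly_ratr_in_alg (Qs : fieldExtType rat) (R : numFieldType) (f : {rmorphism Qs -> R}) q :
  map_poly f (map_poly (in_alg Qs) q) = map_poly ratr q.
Proof.
rewrite -map_poly_comp; apply: eq_map_poly => a /=.
by rewrite alg_num_field fmorph_rat.
Qed.

Lemma normal_num_field_prim_root (s : seq algC) (m : nat) : (0 < m)%N ->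
  {N : splittingFieldType rat & {NC : {rmorphism N -> algC} |
     (forall x, x \in s -> exists y, NC y = x) /\ exists z : N, m.-primitive_root z}}.
Proof.
move=> m_gt0.
pose mq x := sval (minCpolyP x).
have mqP x : map_poly ratr (mq x) = minCpoly x /\ mq x \is monic.
  by rewrite /mq; case: (minCpolyP x) => q [] /=.
pose P := \prod_(x <- s) mq x * ('X^m - 1).
have monP : P \is monic.
  rewrite monicMr ?monic_Xn_sub_1 // monic_prod // => x _; exact: (mqP x).2.
have [r Dr] := closed_field_poly_normal (map_poly (ratr : rat -> algC) P).
rewrite lead_coef_map (monicP monP) rmorph1 scale1r in Dr.
have inr x : root (map_poly ratr P) x -> x \in r by rewrite Dr root_prod_XsubC.
have [N0 [NC [s1 Ds1 gen]]] := num_field_exists r.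
have splitN : FieldExt_isSplittingField _ N0.
  constructor; exists (map_poly (in_alg N0) P); first exact: alg_polyOver.
  exists s1 => //.
  suff -> : map_poly (in_alg N0) P = \prod_(z <- s1) ('X - z%:P) by rewrite eqpxx.
  apply: (map_poly_inj NC); rewrite map_poly_ratr_in_alg Dr -Ds1 big_map rmorph_prod.
  by apply: eq_bigr => y _; rewrite rmorphB /= map_polyX map_polyC.
pose N : splittingFieldType rat := HB.pack_for (splittingFieldType rat) N0 splitN.
exists N, NC; split.
  move=> x sx; have : x \in r.
    apply: inr; rewrite /P rmorphM rootM (big_rem x sx) /= rmorphM rootM -orbA.
    by apply/orP; left; have := root_minCpoly x; rewrite -(mqP x).1.
  by rewrite -Ds1 => /mapP[y _ ->]; exists y.
have [w pw] := C_prim_root_exists m_gt0.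
have : w \in r.
  apply: inr; rewrite /P rmorphM rootM; apply/orP; right.
  by rewrite rmorphB rmorphXn /= map_polyX rmorph1 rootE !hornerE (prim_expr_order pw) subrr.
rewrite -Ds1 => /mapP[y _ Dy]; exists y.
by rewrite -(fmorph_primitive_root NC) -Dy.
Qed.

Section Stepwise.
Variable T : Type.

Fixpoint stepwise (step : seq T -> T -> Prop) (vals ws : seq T) {struct ws} : Prop :=
  if ws is y :: ws' then step vals y /\ stepwise step (rcons vals y) ws' else True.

Lemma stepwise_rcons step vals ws y :
  stepwise step vals (rcons ws y) <-> stepwise step vals ws /\ step (vals ++ ws) y.
Proof.
elim: ws vals => [|w ws IH] vals /=; first by rewrite cats0; tauto.
by rewrite IH cat_rcons; tauto.
Qed.

Lemma stepwise_sub (step1 step2 : seq T -> T -> Prop) vals ws :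
  (forall prev y, step1 prev y -> step2 prev y) ->
  stepwise step1 vals ws -> stepwise step2 vals ws.
Proof. by move=> sub12; elim: ws vals => //= w ws IH vals [/sub12 ? /IH]. Qed.

End Stepwise.

Lemma stepwise_map S T (f : S -> T) step1 step2 vals ws :
  (forall prev y, step1 (map f prev) (f y) -> step2 prev y) ->
  stepwise step1 (map f vals) (map f ws) -> stepwise step2 vals ws.
Proof.
move=> sub12; elim: ws vals => //= w ws IH vals [/sub12 ?].
by rewrite -map_rcons => /IH.
Qed.

(* [m] is a common multiple of the root indices, so that one primitive m-th
   root of unity provides primitive k-th roots for all of them. *)
Definition radical_step (rt : nat -> algC -> algC) (m : nat) (prev : seq algC) (y : algC) :=
  [\/ exists o u v, node_val rt prev o u v = Some y,
      exists k i, [/\ (0 < k)%N, (k %| m)%N & anc_val prev i = Some (y ^+ k)]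
    | exists i x, anc_val prev i = Some x /\ y = x^*].

Lemma radical_step_dvd rt m m' prev y :
  (m %| m')%N -> radical_step rt m prev y -> radical_step rt m' prev y.
Proof.
move=> dvd_mm' [H|[k [i [k_gt0 dvd_km H]]]|H]; [exact: Or31 | apply: Or32 | exact: Or33].
by exists k, i; rewrite (dvdn_trans dvd_km dvd_mm').
Qed.

Definition radical_reachable rt (vals : seq algC) (a : algC) :=
  exists m ws, [/\ (0 < m)%N, stepwise (radical_step rt m) vals ws & a \in ws].

Lemma radical_reachable_rcons rt k vals y a : (0 < k)%N ->
  radical_step rt k vals y -> y = a \/ radical_reachable rt (rcons vals y) a ->
  radical_reachable rt vals a.
Proof.
move=> k_gt0 step_y [<-|[m [ws [m_gt0 steps_ws a_ws]]]].
  by exists k, [:: y]; rewrite mem_head.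
exists (k * m)%N, (y :: ws); split; rewrite ?muln_gt0 ?k_gt0 ?inE ?a_ws ?orbT //=.
split; first by apply: radical_step_dvd step_y; apply: dvdn_mulr.
by apply: stepwise_sub steps_ws => prev z; apply: radical_step_dvd; apply: dvdn_mull.
Qed.

Lemma computed_in_radical_reachable rt t vals a :
  (forall k x, (0 < k)%N -> rt k x ^+ k = x) ->
  computed_in rt vals t a -> radical_reachable rt vals a.
Proof.
move=> rt_root; elim: t vals => [//| o u v t IH | k i t IH | i t IH | i t1 IH1 t2 IH2] vals /=.
- case E: node_val => [y|] // comp_a.
  apply: (radical_reachable_rcons (k := 1) (y := y)) => //.
    by apply: Or31; exists o, u, v.
  by case: comp_a => [|/IH]; [left | right].
- case E: anc_val => [x|] //; case: ifP => // k_gt0 comp_a.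
  apply: (radical_reachable_rcons (y := rt k x) k_gt0); last by case: comp_a => [|/IH]; [left | right].
  by apply: Or32; exists k, i; rewrite rt_root.
- case E: anc_val => [x|] // comp_a.
  apply: (radical_reachable_rcons (k := 1) (y := x^*)) => //.
    by apply: Or33; exists i, x.
  by case: comp_a => [|/IH]; [left | right].
- by case=> [/IH1|/IH2].
Qed.

Section GaloisTower.
Variable N : splittingFieldType rat.
Implicit Types (E : {subfield N}) (g h : gal_of {:N}).

Lemma galMf g h a : (g * h)%g a = h (g a).
Proof. exact: galM (memvf a). Qed.

Lemma galXf g a n : g (a ^+ n) = g a ^+ n.
Proof. exact: rmorphXn. Qed.

Lemma galVK g a : g ((g^-1)%g a) = a.
Proof. by rewrite -galMf mulVg gal_id. Qed.

Lemma mem_Gal_fixed E g : (forall a, a \in E -> g a = a) -> (g \in 'Gal({:N} / E))%g.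
Proof. by move=> fixE; rewrite gal_kHom ?subvf //; apply/kAHomP. Qed.

Lemma commg_Gal_adjoin_seq E ys :
  (forall g h, (g \in 'Gal({:N} / E))%g -> (h \in 'Gal({:N} / E))%g ->
     {in ys, forall y, [~ g, h]%g y = y}) ->
  ([~: 'Gal({:N} / E), 'Gal({:N} / E)] \subset 'Gal({:N} / <<E & ys>>%AS))%g.
Proof.
move=> fix_ys; rewrite gen_subG; apply/subsetP => _ /imset2P[g h gE hE ->].
apply: mem_Gal_fixed; suff: (<<E & ys>>%VS <= fixedSpace [~ g, h]%g)%VS.
  by move/subvP=> sub a /sub /fixedSpaceP.
apply/Fadjoin_seqP; split=> [|y ys_y]; last by apply/fixedSpaceP; apply: fix_ys.
by apply/subvP => a aE; apply/fixedSpaceP; apply: fixed_gal (subvf _) _ aE; rewrite groupR.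
Qed.

Lemma cyclotomic_commg_fix g h m z : m.-primitive_root z -> [~ g, h]%g z = z.
Proof.
move=> prim_z.
have De (u : gal_of {:N}) : exists e : nat, u z = z ^+ e.
  have : u z ^+ m = 1 by rewrite -galXf (prim_expr_order prim_z) rmorph1.
  by case/(prim_rootP prim_z) => e ->; exists e.
have [a Da] := De (g^-1)%g; have [b Db] := De (h^-1)%g.
have [c Dc] := De g; have [d Dd] := De h.
have ac : z ^+ (c * a) = z by rewrite exprM -Dc -galXf -Da; apply: galVK.
have bd : z ^+ (d * b) = z by rewrite exprM -Dd -galXf -Db; apply: galVK.
rewrite commgEl conjgE !galMf Da galXf Db !galXf Dc !galXf Dd -!exprM.
have -> : (d * (c * (b * a)) = (c * a) * (d * b))%N by ring.
by rewrite exprM ac bd.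
Qed.

Lemma kummer_commg_fix E g h y k w :
    (g \in 'Gal({:N} / E))%g -> (h \in 'Gal({:N} / E))%g ->
    (0 < k)%N -> y ^+ k \in E -> k.-primitive_root w -> w \in E ->
  [~ g, h]%g y = y.
Proof.
move=> gE hE k_gt0 yk_E prim_w wE; have [-> | y_nz] := eqVneq y 0; first by rewrite rmorph0.
(* Each element of Gal(N/E) moves y by a k-th root of unity, which lies in E. *)
have scaleE u : (u \in 'Gal({:N} / E))%g -> exists2 c, c \in E & u y = c * y.
  move=> uE; have : (u y / y) ^+ k = 1.
    rewrite exprMn -galXf (fixed_gal (subvf _) uE yk_E) exprVn mulfV //.
    exact: expf_neq0.
  by case/(prim_rootP prim_w) => i Di; exists (w ^+ i); rewrite ?rpredX // -Di mulfVK.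
have fixE u c : (u \in 'Gal({:N} / E))%g -> c \in E -> u (c * y) = c * u y.
  by move=> uE cE; rewrite rmorphM; congr (_ * _); apply: fixed_gal (subvf _) uE cE.
have [c1 c1E D1] := scaleE _ (groupVr gE); have [c2 c2E D2] := scaleE _ (groupVr hE).
have [c3 c3E D3] := scaleE _ gE; have [c4 c4E D4] := scaleE _ hE.
have c13 : c1 * c3 = 1.
  by apply: (mulIf y_nz); rewrite mul1r -mulrA -D3 -fixE // -D1 galVK.
have c24 : c2 * c4 = 1.
  by apply: (mulIf y_nz); rewrite mul1r -mulrA -D4 -fixE // -D2 galVK.
rewrite commgEl conjgE !galMf D1 fixE ?groupV // D2 mulrA fixE ?rpredM // D3.
rewrite !mulrA fixE ?rpredM // D4 mulrA -(mulrA c1) (mulrC c2) mulrA c13 mul1r.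
by rewrite c24 mul1r.
Qed.

Definition gal_orbit (y : N) : seq N := codom (fun g : gal_of {:N} => g y).

Definition gal_orbits (ys : seq N) : seq N := flatten (map gal_orbit ys).

Lemma mem_gal_orbits g y ys : y \in ys -> g y \in gal_orbits ys.
Proof. by move=> ys_y; apply/flatten_mapP; exists y => //; apply: codom_f. Qed.

(* Conjugation becomes a Galois automorphism: complex conjugation restricts to
   the normal field N. *)
Definition field_radical_step (m : nat) (prev : seq N) (y : N) : Prop :=
  (exists k, [/\ (0 < k)%N, (k %| m)%N & y ^+ k \in <<1 & prev>>%VS])
  \/ (exists2 x, x \in prev & exists g : gal_of {:N}, y = g x).

Definition radical_tower z ts : {subfield N} := <<1 & z :: gal_orbits ts>>%AS.

Lemma commg_Gal_radical_step m z ts y :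
    m.-primitive_root z -> field_radical_step m ts y ->
  ([~: 'Gal({:N} / radical_tower z ts), 'Gal({:N} / radical_tower z ts)]
     \subset 'Gal({:N} / radical_tower z (rcons ts y)))%g.
Proof.
set E := radical_tower z ts => prim_z step_y.
have orbitsE g x : x \in ts -> g x \in E.
  by move=> ts_x; rewrite seqv_sub_adjoin // inE mem_gal_orbits ?orbT.
have zE : z \in E by rewrite seqv_sub_adjoin ?mem_head.
apply: subset_trans (commg_Gal_adjoin_seq (ys := gal_orbit y) _) (galS _ _).
  move=> g h gE hE _ /codomP[s ->].
  case: step_y => [[k [k_gt0 dvd_km yk]] | [x ts_x [u ->]]]; last first.
    by rewrite -(galMf u s) (fixed_gal (subvf _) _ (orbitsE _ _ ts_x)) ?groupR.
  apply: (kummer_commg_fix gE hE k_gt0 _ (dvdn_prim_root prim_z dvd_km)).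
    rewrite -galXf; suff : (s @: <<1 & ts>> <= E)%VS by move/subvP; apply; apply: memv_img.
    rewrite aimg_adjoin_seq aimg1; apply/Fadjoin_seqP; split; first exact: sub1v.
    by move=> _ /mapP[x ts_x ->]; apply: orbitsE.
  by rewrite rpredX.
apply/Fadjoin_seqP; split=> [|x]; first exact: subv_trans (subv_adjoin_seq _ _) (subv_adjoin_seq _ _).
rewrite inE /gal_orbits map_rcons -cats1 flatten_cat mem_cat /= cats0.
case/or3P=> [/eqP-> | ts_x | y_x].
- exact: (subvP (subv_adjoin_seq _ _) _ zE).
- by apply: (subvP (subv_adjoin_seq _ _)); rewrite seqv_sub_adjoin // inE ts_x orbT.
- exact: seqv_sub_adjoin.
Qed.

Lemma derived_Gal_radical_tower m z ts :
    m.-primitive_root z -> stepwise (field_radical_step m) [::] ts ->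
  ('Gal({:N} / 1)^`((size ts).+1) \subset 'Gal({:N} / radical_tower z ts))%g.
Proof.
move=> prim_z; elim/last_ind: ts => [_ | ts y IH /stepwise_rcons[steps_ts step_y]].
  rewrite derg1; apply: (commg_Gal_adjoin_seq (ys := [:: z])) => g h _ _ x; rewrite inE => /eqP->.
  exact: cyclotomic_commg_fix prim_z.
rewrite size_rcons dergSn; apply: subset_trans (commgSS (IH steps_ts) (IH steps_ts)) _.
exact: (commg_Gal_radical_step prim_z step_y).
Qed.

End GaloisTower.

Lemma exists_map_preimage (T : Type) (f : T -> algC) (s : seq algC) :
  (forall x, x \in s -> exists y, f y = x) -> exists ts, map f ts = s.
Proof.
elim: s => [|x s IH] sub_s; first by exists [::].
have [y Dy] := sub_s x (mem_head _ _).
have [ts Dts] := IH (fun w s_w => sub_s w (mem_behead (s := x :: s) s_w)).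
by exists (y :: ts); rewrite /= Dy Dts.
Qed.

Lemma gal_of_lrmorphism (N : splittingFieldType rat) (f : {lrmorphism N -> N}) :
  {g : gal_of {:N} | g =1 f}.
Proof. by exists (gal {:N} (linfun_ahom f)) => b; rewrite galK ?subvf ?memvf //= lfunE. Qed.

Lemma field_radical_step_model (N : splittingFieldType rat) (NC : {rmorphism N -> algC})
    (tau : gal_of {:N}) rt m prev y :
    (forall a, NC (tau a) = (NC a)^*) ->
  radical_step rt m (map NC prev) (NC y) -> field_radical_step m prev y.
Proof.
move=> NC_tau.
have ancP i x : anc_val (map NC prev) i = Some x -> exists2 b, b \in prev & x = NC b.
  rewrite /anc_val size_map; case: ifP => // lt_i [<-].
  by exists (nth 0 prev i); rewrite ?mem_nth // (nth_map 0).
have opndP u x : opnd_val (map NC prev) u = Some x ->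
    exists2 b, b \in <<1 & prev>>%VS & x = NC b.
  case: u => [z [<-]|i /ancP[b prev_b ->]]; last by exists b; rewrite ?seqv_sub_adjoin.
  by exists z%:~R; rewrite ?rpred_int ?rmorph_int.
case=> [[o [u [v]]] | [k [i [k_gt0 dvd_km]]] | [i [x [/ancP[b prev_b ->] Dy]]]].
- rewrite /node_val; case Eu: opnd_val => [x1|] //; case Ev: opnd_val => [x2|] //.
  have [b1 b1P ->] := opndP _ _ Eu; have [b2 b2P ->] := opndP _ _ Ev.
  move=> Dy; left; exists 1%N; split; rewrite ?dvd1n ?expr1 //.
  case: o Dy => /=; [ case | case | case | case: ifP => // _ [] ];
    rewrite -?rmorphD -?rmorphB -?rmorphM -?fmorph_div => /fmorph_inj <-.
  + by rewrite rpredD.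
  + by rewrite rpredB.
  + by rewrite rpredM.
  + by rewrite rpredM ?rpredV.
- case/ancP=> b prev_b; rewrite -rmorphXn => /fmorph_inj Db.
  by left; exists k; rewrite Db seqv_sub_adjoin.
- right; exists b => //; exists tau.
  by apply: (fmorph_inj NC); rewrite NC_tau.
Qed.

Lemma conjugates_in_gal_stable_subfield (N : splittingFieldType rat)
    (NC : {rmorphism N -> algC}) (a : N) (F : {subfield N}) (p : {poly rat}) :
    (forall g : gal_of {:N}, g a \in F) -> irreducible_poly p ->
    root (map_poly ratr p) (NC a) ->
  forall b, root (map_poly ratr p) b -> exists2 c, c \in F & NC c = b.
Proof.
move=> orbit_a p_irr p_a b p_b; pose q := minPoly 1%AS a.
have qK : map_poly (in_alg N) (ratpoly q) = q by rewrite ratpolyK // minPolyOver.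
have dvd_qp : ratpoly q %| p.
  rewrite -(dvdp_map (in_alg N)) qK; apply: minPoly_dvdp (alg_polyOver _ _) _.
  by rewrite -(fmorph_root NC) map_poly_ratr_in_alg.
have size_q : size (ratpoly q) != 1.
  by rewrite -(size_map_inj_poly (fmorph_inj (in_alg N))) ?rmorph0 // qK size_minPoly.
have q_b : root (map_poly NC q) b.
  rewrite -qK map_poly_ratr_in_alg (eqp_root (_ : _ %= map_poly ratr p)) //.
  by rewrite eqp_map (p_irr.2 _ size_q dvd_qp).
have [rs /eqP Dq] := splitting_field_normal 1 a.
have : b \in map NC rs.
  rewrite -root_prod_XsubC big_map; move: q_b; rewrite /q Dq rmorph_prod.
  by rewrite (eq_bigr (fun y => 'X - (NC y)%:P)) // => y _; rewrite rmorphB /= map_polyX map_polyC.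
case/mapP => r rs_r ->; have q_r : root q r by rewrite /q Dq root_prod_XsubC.
have [g _ <-] := normalField_root_minPoly (sub1v _) (normalFieldf 1) (memvf a) q_r.
by exists (g a).
Qed.

Section CompatibleAutomorphisms.
Variables (L : splittingFieldType rat) (K : {subfield L}) (N : splittingFieldType rat).
Variables (LC : {rmorphism L -> algC}) (NC : {rmorphism N -> algC}).

Definition compatible_auts (x : gal_of K) (y : gal_of {:N}) : Prop :=
  forall a b, a \in K -> LC a = NC b <-> LC (x a) = NC (y b).

Lemma compatible_auts1 : compatible_auts 1%g 1%g.
Proof. by move=> a b aK; rewrite !gal_id. Qed.

Lemma compatible_autsM x1 y1 x2 y2 :
  compatible_auts x1 y1 -> compatible_auts x2 y2 -> compatible_auts (x1 * x2)%g (y1 * y2)%g.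
Proof.
move=> c1 c2 a b aK; rewrite galM // galMf; have x1aK := memv_gal x1 aK.
by split=> [/(c1 _ _ aK)/(c2 _ _ x1aK) | /(c2 _ _ x1aK)/(c1 _ _ aK)].
Qed.

Lemma compatible_autsV x y : compatible_auts x y -> compatible_auts x^-1%g y^-1%g.
Proof.
move=> cxy a b aK; have := cxy _ ((y^-1)%g b) (memv_gal (x^-1)%g aK).
by rewrite -galM // mulVg gal_id galVK => eqv; split=> /eqv.
Qed.

Lemma compatible_autsR x1 y1 x2 y2 :
  compatible_auts x1 y1 -> compatible_auts x2 y2 -> compatible_auts [~ x1, x2]%g [~ y1, y2]%g.
Proof.
move=> c1 c2; rewrite !commgEl !conjgE.
by do 2!apply: compatible_autsM (compatible_autsV _) _ => //; apply: compatible_autsM.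
Qed.

Lemma compatible_auts_prod n (xs : 'I_n -> gal_of K) (ys : 'I_n -> gal_of {:N}) :
  (forall i, compatible_auts (xs i) (ys i)) ->
  compatible_auts (\prod_i xs i)%g (\prod_i ys i)%g.
Proof.
elim: n xs ys => [|n IH] xs ys cxy; first by rewrite !big_ord0; apply: compatible_auts1.
by rewrite !big_ord_recr /=; apply: compatible_autsM (cxy _); apply: IH.
Qed.

Lemma Gal_compatible_aut x : exists2 y, (y \in 'Gal({:N} / 1))%g & compatible_auts x y.
Proof.
have [nu Dnu] := extend_algC_subfield_aut LC (gal_repr x).
have [nuN DnuN] := restrict_aut_to_normal_num_field NC nu.
have [y Dy] := gal_of_lrmorphism nuN.
exists y; first by rewrite gal_kHom ?subvf // k1HomE ahomWin.
move=> a b aK; rewrite Dy DnuN Dnu; split=> [-> // | ].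
exact: fmorph_inj.
Qed.

Lemma derived_compatible_auts j x : (x \in 'Gal(K / 1)^`(j))%g ->
  exists2 y, (y \in 'Gal({:N} / 1)^`(j))%g & compatible_auts x y.
Proof.
elim: j x => [|j IH] x; first by move=> _; apply: Gal_compatible_aut.
rewrite dergSn => /gen_prodgP[n [xs xs_comm ->]].
have : forall i, exists2 y, (y \in 'Gal({:N} / 1)^`(j.+1))%g & compatible_auts (xs i) y.
  move=> i; case/imset2P: (xs_comm i) => g h gD hD ->.
  have [g' g'D cg] := IH _ gD; have [h' h'D ch] := IH _ hD.
  by exists [~ g', h']%g; [rewrite dergSn mem_commg | apply: compatible_autsR].
case/fin_all_exists2 => ys ysD cxy; exists (\prod_i ys i)%g.
  by apply: group_prod => i _; apply: ysD.
exact: compatible_auts_prod.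
Qed.

Lemma solvable_Gal_roots_in_derived_fixed p (F : {subfield N}) j :
    splittingFieldFor 1%AS (map_poly (in_alg L) p) K ->
    ('Gal({:N} / 1)^`(j) \subset 'Gal({:N} / F))%g ->
    (forall b, root (map_poly ratr p) b -> exists2 c, c \in F & NC c = b) ->
  solvable 'Gal(K / 1%AS).
Proof.
move=> [rs Drs genK] derF rootsF.
apply/derivedP; exists j; apply/trivgP/subsetP => x xD; rewrite inE.
have [y yD cxy] := derived_compatible_auts xD.
have fix_rs r : r \in rs -> x r = r.
  move=> rs_r; have rK : r \in K by rewrite -genK seqv_sub_adjoin.
  have [c cF Dc] : exists2 c, c \in F & NC c = LC r.
    apply: rootsF; rewrite -(map_poly_ratr_in_alg LC) fmorph_root.
    by rewrite (eqp_root Drs) root_prod_XsubC.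
  have := (cxy r c rK).1 (esym Dc).
  by rewrite (fixed_gal (subvf _) (subsetP derF y yD) cF) Dc => /fmorph_inj.
apply/gal_eqP => b bK; rewrite gal_id.
suff : (<<1 & rs>>%VS <= fixedSpace (gal_repr x))%VS.
  by rewrite genK => /subvP/(_ b bK)/fixedSpaceP.
apply/Fadjoin_seqP; split=> [|r rs_r]; last by apply/fixedSpaceP; apply: fix_rs.
by apply/subvP => _ /vlineP[k ->]; apply/fixedSpaceP; rewrite linearZ rmorph1.
Qed.

End CompatibleAutomorphisms.

Lemma computed_in_radical_tower rt t alpha :
    (forall k x, (0 < k)%N -> rt k x ^+ k = x) -> computed_by rt t alpha ->
  exists (N : splittingFieldType rat) (NC : {rmorphism N -> algC}) (F : {subfield N}) a j,
    [/\ NC a = alpha, forall g : gal_of {:N}, g a \in F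
      & ('Gal({:N} / 1)^`(j) \subset 'Gal({:N} / F))%g].
Proof.
move=> rt_root /(computed_in_radical_reachable rt_root)[m [ws [m_gt0 steps_ws alpha_ws]]].
have [N [NC [ws_NC [z prim_z]]]] := normal_num_field_prim_root ws m_gt0.
have [ts Dts] := exists_map_preimage ws_NC.
have [conjN DconjN] := restrict_aut_to_normal_num_field NC Num.Def.conjC.
have [tau Dtau] := gal_of_lrmorphism conjN.
have steps_ts : stepwise (field_radical_step m) [::] ts.
  apply: (stepwise_map (f := NC) (step1 := radical_step rt m) (vals := [::])); last by rewrite Dts.
  by move=> prev y; apply: (field_radical_step_model (tau := tau)) => b; rewrite Dtau DconjN.
have [a ts_a Da] : exists2 a, a \in ts & NC a = alpha.
  by move: alpha_ws; rewrite -Dts => /mapP[a ts_a ->]; exists a.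
exists N, NC, (radical_tower z ts), a, (size ts).+1; split=> //.
  by move=> g; rewrite seqv_sub_adjoin // inE mem_gal_orbits ?orbT.
exact: derived_Gal_radical_tower prim_z steps_ts.
Qed.

Theorem lemma7
  (rt : nat -> algC -> algC)
  (rt_root : forall (k : nat) (x : algC), (0 < k)%N -> rt k x ^+ k = x)
  (t : rtree) (alpha : algC) (halpha : computed_by rt t alpha)
  (p : {poly rat}) (p_irr : irreducible_poly p)
  (p_alpha : root (map_poly ratr p) alpha)
  (L : splittingFieldType rat) (K : {subfield L})
  (K_split : splittingFieldFor 1%AS (map_poly (in_alg L) p) K)
  (n : nat) (n_ge5 : (5 <= n)%N) :
  ~ exists H : {group gal_of K},
      (H \subset 'Gal(K / 1%AS))%g /\ (H \isog [set: 'S_n])%g.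
Proof.
case=> H [sub_H isoH].
have [N [NC [F [a [j [Da orbit_a derF]]]]]] := computed_in_radical_tower rt_root halpha.
have rootsF := conjugates_in_gal_stable_subfield orbit_a p_irr (etrans (congr1 _ Da) p_alpha).
have solK := solvable_Gal_roots_in_derived_fixed (numfield_embedding L) K_split derF rootsF.
have := solvableS sub_H solK.
by rewrite (isog_sol isoH) (solvable_SymF (T := 'I_n)) ?card_ord.
Qed.
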